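(* Let $(G,R,x_I,x_G)$ be any instance of the multi-robot path planning problem on graphs. Algorithm TOMPP is complete: if the instance has a solution, TOMPP terminates and returns a solution, and otherwise it reports that no solution exists. Moreover, whenever a solution exists, the solution returned by TOMPP has minimum makespan among all solutions of the instance.
   Context: Multi-robot path planning on graphs: $G=(V,E)$ is a connected, undirected, simple graph; $R=\{r_1,\dots,r_n\}$ is a set of robots; $x_I,x_G:R\to V$ are injective maps (initial and goal locations). Let $\mathbb Z^+=\mathbb N\cup\{0\}$. A path is a map $p_i:\mathbb Z^+\to V$. It is feasible for robot $r_i$ if (1) $p_i(0)=x_I(r_i)$; (2) there is a smallest $k_i^{\min}\in\mathbb Z^+$ with $p_i(k)=x_G(r_i)$ for all $k\ge k_i^{\min}$; (3) for all $0\le k<k_i^{\min}$, either $(p_i(k),p_i(k+1))\in E$ or $p_i(k)=p_i(k+1)$. Two paths $p_i,p_j$ ($i\neq j$) collide if there is $k$ with $p_i(k)=p_j(k)$ or $(p_i(k),p_i(k+1))=(p_j(k+1),p_j(k))$. A solution is a set $P=\{p_1,\dots,p_n\}$ with each $p_i$ feasible for $r_i$ and no two paths colliding. Its makespan is $T_P=\max_i k_i^{\min}$. Time-expanded network for a natural number $T$: a directed graph $G'$ whose vertices are, for each $v\in V$, copies $v(0)=v(0)'$, $v(1),v(1)',v(2),v(2)',\dots,v(T),v(T)'$, together with gadget vertices described next. Edges (all of unit capacity): $(v(t),v(t)')$ for $1\le t\le T$ and $(v(t)',v(t+1))$ for $0\le t<T$, for each $v\in V$; for each edge $\{u,v\}\in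 E$ and each $0\le t<T$, two new vertices $a,b$ and edges $u(t)'\to a$, $v(t)'\to a$, $a\to b$, $b\to u(t+1)$, $b\to v(t+1)$; and $n$ loopback edges $e_1,\dots,e_n$, where $e_i$ goes from $x_G(r_i)(T)'$ to $x_I(r_i)(0)$. Index all edges of $G'$ as $e_1,e_2,\dots$ with the loopback edges first. The ILP for $T$ has binary variables $x_{i,j}$ ($1\le i\le n$, $e_j\in G'$), constraints $\sum_{i=1}^n x_{i,j}\le 1$ for every edge $e_j$, $x_{i,j}=0$ for $1\le i,j\le n$, $i\ne j$, and for every vertex $v$ of $G'$ and every $i$, $\sum_{e_j\text{ entering } v}x_{i,j}=\sum_{e_j\text{ leaving }v}x_{i,j}$; objective: maximize $\sum_{i=1}^n x_{i,i}$. Algorithm TOMPP: start with $T=\max_i d_G(x_I(r_i),x_G(r_i))$ (graph distance); build and solve the ILP for $T$; if the optimum equals $n$, output the paths obtained by letting robot $r_i$ be at vertex $v$ at time $t$ when the unit flow of commodity $i$ passes through $v(t)$ (and staying at its goal afterwards); otherwise increase $T$ by one and repeat, reporting that no solution exists once $T$ exceeds a bound (e.g., the number of joint configurations) beyond which no new solutions can appear. *)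

From mathcomp Require Import all_boot.
Set Implicit Arguments. Unset Strict Implicit. Unset Printing Implicit Defensive.

Section MRPP.
(* G = (V, e): a finite simple graph (e symmetric, irreflexive; connectivity is
   a hypothesis of the theorem); robots r_1..r_n are 'I_n; xI, xG : R -> V. *)
Variables (V : finType) (e : rel V) (n : nat) (xI xG : 'I_n -> V).

Definition is_kmin (p : nat -> V) (g : V) (k : nat) : Prop :=
  (forall k', k <= k' -> p k' = g) /\
  (forall k'', (forall k', k'' <= k' -> p k' = g) -> k <= k'').

Definition feasible_path (i : 'I_n) (p : nat -> V) : Prop :=
  p 0 = xI i /\
  exists kmin, is_kmin p (xG i) kmin /\
    forall k, k < kmin -> e (p k) (p k.+1) \/ p k = p k.+1.

Definition collide (p q : nat -> V) : Prop :=
  exists k, p k = q k \/ (p k = q k.+1 /\ p k.+1 = q k).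

Definition is_solution (P : 'I_n -> nat -> V) : Prop :=
  (forall i, feasible_path i (P i)) /\
  (forall i j : 'I_n, i != j -> ~ collide (P i) (P j)).

Definition has_makespan (P : 'I_n -> nat -> V) (T : nat) : Prop :=
  exists km : 'I_n -> nat,
    (forall i, is_kmin (P i) (xG i) (km i)) /\ T = \max_(i < n) km i.

Fixpoint walk (k : nat) (u v : V) : bool :=
  if k is k'.+1 then [exists w, e u w && walk k' w v] else u == v.

(* least k such that there is a walk of length k from u to v
   (for connected graphs it is always < #|V|) *)
Definition dist (u v : V) : nat := find (fun k => walk k u v) (iota 0 #|V|).

(* Nodes are encoded as (tag, u, v, t):
   tag 0 : v(t)   (as (0,v,v,t));  tag 1 : v(t)' for t >= 1 (as (1,v,v,t));
   tag 2 : gadget vertex a of edge {u,v} at time t;  tag 3 : gadget vertex b. *)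
Definition tnode := (nat * V * V * nat)%type.
Definition vin (v : V) (t : nat) : tnode := (0, v, v, t).
Definition vout (v : V) (t : nat) : tnode := if t == 0 then vin v 0 else (1, v, v, t).
Definition gA (u v : V) (t : nat) : tnode := (2, u, v, t).
Definition gB (u v : V) (t : nat) : tnode := (3, u, v, t).

(* each undirected edge {u,v} listed once, oriented by enum_rank *)
Definition gpairs : seq (V * V) :=
  [seq (u, v) | u <- enum V,
                v <- [seq w <- enum V | (enum_rank u < enum_rank w) && e u w]].

(* edges of G' for T, loopback edges first (e_1..e_n, e_i for robot r_i) *)
Definition ten_edges (T : nat) : seq (tnode * tnode) :=
  [seq (vout (xG i) T, vin (xI i) 0) | i <- enum 'I_n]
  ++ [seq (vin v t, vout v t) | v <- enum V, t <- iota 1 T]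
  ++ [seq (vout v t, vin v t.+1) | v <- enum V, t <- iota 0 T]
  ++ flatten [seq [:: (vout p.1 t, gA p.1 p.2 t); (vout p.2 t, gA p.1 p.2 t);
                     (gA p.1 p.2 t, gB p.1 p.2 t);
                     (gB p.1 p.2 t, vin p.1 t.+1); (gB p.1 p.2 t, vin p.2 t.+1)]
             | p <- gpairs, t <- iota 0 T].

Definition edge_of (T : nat) (j : 'I_(size (ten_edges T))) : tnode * tnode :=
  tnth (in_tuple (ten_edges T)) j.

(** * The ILP for T: binary variables x i j (commodity i, edge e_j) *)
Definition ilp_var (T : nat) := 'I_n -> 'I_(size (ten_edges T)) -> bool.

Definition inflow T (x : ilp_var T) (i : 'I_n) (w : tnode) : nat :=
  \sum_(j < size (ten_edges T) | (edge_of j).2 == w) x i j.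
Definition outflow T (x : ilp_var T) (i : 'I_n) (w : tnode) : nat :=
  \sum_(j < size (ten_edges T) | (edge_of j).1 == w) x i j.

Definition ilp_feasible T (x : ilp_var T) : Prop :=
  (forall j, \sum_(i < n) x i j <= 1) /\
  (forall (i : 'I_n) (j : 'I_(size (ten_edges T))), j < n -> val j != val i -> x i j = false) /\
  (forall (w : tnode) (i : 'I_n), inflow x i w = outflow x i w).

Definition ilp_value T (x : ilp_var T) : nat :=
  \sum_(i < n) \sum_(j < size (ten_edges T) | val j == val i) x i j.

Definition ilp_optimal T (x : ilp_var T) : Prop :=
  ilp_feasible x /\ forall y : ilp_var T, ilp_feasible y -> ilp_value y <= ilp_value x.

Definition extract T (x : ilp_var T) : 'I_n -> nat -> V :=
  fun i t => if t <= T then odflt (xG i) [pick v | 0 < inflow x i (vin v t)]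
             else xG i.

Definition T_start : nat := \max_(i < n) dist (xI i) (xG i).

(* number of joint configurations R -> V *)
Definition T_bound : nat := #|V| ^ n.

(* [solve T] is the (arbitrary) optimal ILP solution returned by the solver *)
Fixpoint tompp_run (solve : forall T, ilp_var T) (fuel T : nat)
  : option ('I_n -> nat -> V) :=
  if ilp_value (solve T) == n then Some (extract (solve T))
  else if fuel is f.+1 then tompp_run solve f T.+1 else None.

Definition tompp (solve : forall T, ilp_var T) : option ('I_n -> nat -> V) :=
  if T_start <= T_bound then tompp_run solve (T_bound - T_start) T_start else None.

End MRPP.

From mathcomp Require Import all_boot zify.
Set Implicit Arguments. Unset Strict Implicit. Unset Printing Implicit Defensive.

(* A family of collision-free paths that all reach their goals by
   time T is the same thing as an integral multicommodity flow of value n in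
   the time-expanded network for T.  Given the paths, route commodity i along
   the copies of the vertices robot r_i visits, crossing an edge gadget when it
   moves, and close the circuit with its loopback edge: a vertex collision would
   share an edge v(t) -> v(t)', a swap would share the gadget edge a -> b.
   Conversely, every edge of the network except the loopbacks strictly
   increases the level 4t + tag of its endpoints, so by flow conservation a
   commodity of value one crosses every level cut exactly once, hence occupies
   exactly one vertex copy at each time; unit capacities then exclude
   collisions.  So the ILP for T has optimum n exactly when a solution of
   makespan at most T exists, and TOMPP, trying T upwards from the distance
   lower bound, stops at the minimum makespan.  A solution whose makespan
   exceeds the number of joint configurations repeats a configuration and can
   be shortened, so giving up beyond that bound is correct. *)

Lemma uniq_cat_disjoint (A : eqType) (a b : seq A) :
  uniq a -> uniq b -> (forall x, x \in a -> x \in b -> False) -> uniq (a ++ b).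
Proof.
move=> ua ub H; rewrite cat_uniq ua ub andbT /=; apply/hasPn => x xb.
by apply/negP => xa; apply: (H x).
Qed.

Lemma uniq_flatten_by_key (A B : eqType) (L : seq (seq A)) (key : A -> B) (bkey : seq A -> B) :
  (forall bl, bl \in L -> uniq bl) ->
  (forall bl z, bl \in L -> z \in bl -> key z = bkey bl) ->
  uniq (map bkey L) -> uniq (flatten L).
Proof.
elim: L => //= bl L IH Hu Hk /andP [nin uL].
apply: uniq_cat_disjoint.
- by apply: Hu; rewrite inE eqxx.
- apply: IH => // [bl' H|bl' z H]; [apply: Hu | apply: Hk]; by rewrite inE H orbT.
- move=> z zbl /flattenP [bl' bl'L zbl'].
  have E1 := Hk bl z (mem_head _ _) zbl.
  have E2 : key z = bkey bl' by apply: Hk => //; rewrite inE bl'L orbT.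
  by move: nin; rewrite -E1 E2 map_f.
Qed.

Lemma map_allpairs (A B C D : Type) (F : C -> D) (f : A -> B -> C) l1 l2 :
  map F [seq f x y | x <- l1, y <- l2] = [seq F (f x y) | x <- l1, y <- l2].
Proof. by elim: l1 => //= a l1 IH; rewrite map_cat IH -map_comp. Qed.

Lemma count_flatten_map (A B : Type) (a : pred A) (F : B -> seq A) l :
  count a (flatten [seq F t | t <- l]) = \sum_(t <- l) count a (F t).
Proof. by elim: l => [|b l IH]; rewrite ?big_nil ?big_cons //= count_cat IH. Qed.

Lemma count_predI_mem (A : eqType) (l E : seq A) (P : pred A) :
  uniq l -> uniq E -> {subset E <= l} ->
  count (fun z => P z && (z \in E)) l = count P E.
Proof.
move=> ul uE sub; rewrite -count_filter.
apply/permP/uniq_perm; rewrite ?filter_uniq // => z.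
by rewrite mem_filter andb_idr //; apply: sub.
Qed.

Lemma count_split (A : Type) (p r : pred A) l :
  count p l = count (fun z => p z && r z) l + count (fun z => p z && ~~ r z) l.
Proof. by elim: l => //= a l ->; case: (p a); case: (r a) => //=; rewrite addnCA. Qed.

Lemma count_eq1 (A : eqType) (p : pred A) l a :
  uniq l -> a \in l -> p a -> (forall z, z \in l -> p z -> z = a) -> count p l = 1.
Proof.
move=> ul al pa H; rewrite (@eq_in_count _ _ (pred1 a)) ?count_uniq_mem ?al //.
by move=> z zl /=; apply/idP/eqP => [/(H _ zl)|->].
Qed.

Lemma count_ge2 (A : eqType) (p : pred A) l a b :
  a != b -> a \in l -> b \in l -> p a -> p b -> 2 <= count p l.
Proof.
move=> ab al bl pa pb; rewrite (count_split _ (pred1 a)).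
have h1 : 0 < count (fun z => p z && pred1 a z) l.
  by rewrite -has_count; apply/hasP; exists a; rewrite //= pa eqxx.
have h2 : 0 < count (fun z => p z && ~~ pred1 a z) l.
  by rewrite -has_count; apply/hasP; exists b; rewrite //= pb eq_sym ab.
lia.
Qed.

Lemma sum_bool_le1 (I : finType) (F : I -> bool) :
  (forall i k, F i -> F k -> i = k) -> \sum_i F i <= 1.
Proof.
move=> H; case: (pickP F) => [i Fi|none].
- rewrite (bigD1 i) //= big1 ?Fi // => k; case Fk: (F k) => //.
  by rewrite (H _ _ Fk Fi) eqxx.
- by rewrite big1 // => k _; rewrite none.
Qed.

Lemma sum_bool_ge2 (I : finType) (F : I -> bool) i k :
  i != k -> F i -> F k -> 2 <= \sum_l F l.
Proof.
move=> ik Fi Fk; rewrite (bigD1 i) //= (bigD1 k) /=; last by rewrite eq_sym ik.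
by rewrite Fi Fk.
Qed.

Lemma sum_bool_eq_card (I : finType) (F : I -> bool) : \sum_l F l = #|I| -> forall i, F i.
Proof.
move=> H i.
have : \sum_l F l = \sum_(l | F l) 1.
  by rewrite [RHS]big_mkcond /=; apply: eq_bigr => l _; case: (F l).
rewrite sum1_card H => /esym Hc.
have : [pred l | F l] =i I by apply/subset_cardP; [rewrite Hc | apply/subsetP].
by move/(_ i); rewrite !inE.
Qed.

Lemma ex_common_bound (I : finType) (Q : I -> nat -> Prop) :
  (forall i k k', k <= k' -> Q i k -> Q i k') -> (forall i, exists k, Q i k) ->
  exists K, forall i, Q i K.
Proof.
move=> mono H.
suff [K HK] : exists K, forall i, i \in enum I -> Q i K.
  by exists K => i; apply: HK; rewrite mem_enum.
elim: (enum I) => [|i0 s [K HK]]; first by exists 0.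
case: (H i0) => k Hk; exists (maxn K k) => i; rewrite inE => /orP [/eqP ->|i_s].
- exact: mono (leq_maxr _ _) Hk.
- exact: mono (leq_maxl _ _) (HK _ i_s).
Qed.

Section TimeExpandedNetwork.
Variables (V : finType) (e : rel V) (e_sym : symmetric e).
Variables (n : nat) (xI xG : 'I_n -> V) (xI_inj : injective xI) (xG_inj : injective xG).

Local Notation net T := (ten_edges e xI xG T).

Definition node_tag (nd : tnode V) := nd.1.1.1.
Definition node_time (nd : tnode V) := nd.2.

Lemma voutE (v : V) t : vout v t = ((t != 0 : nat), v, v, t).
Proof. by rewrite /vout; case: eqP => [->|]. Qed.

Lemma node_tag_vout v t : node_tag (vout v t) <= 1.
Proof. by rewrite voutE /node_tag /=; case: (t != 0). Qed.

Lemma node_time_vout v t : node_time (vout v t) = t.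
Proof. by rewrite voutE. Qed.

Definition loopback T (i : 'I_n) := (vout (xG i) T, vin (xI i) 0).
Definition vertex_edges T := [seq (vin v t, vout v t) | v <- enum V, t <- iota 1 T].
Definition wait_edges T := [seq (vout v t, vin v t.+1) | v <- enum V, t <- iota 0 T].
Definition gadget (p : V * V) t :=
  [:: (vout p.1 t, gA p.1 p.2 t); (vout p.2 t, gA p.1 p.2 t); (gA p.1 p.2 t, gB p.1 p.2 t);
      (gB p.1 p.2 t, vin p.1 t.+1); (gB p.1 p.2 t, vin p.2 t.+1)].
Definition gadget_edges T := flatten [seq gadget p t | p <- gpairs e, t <- iota 0 T].

Lemma ten_edgesE T :
  net T = map (loopback T) (enum 'I_n) ++ vertex_edges T ++ wait_edges T ++ gadget_edges T.
Proof. by []. Qed.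

Lemma gpairsP u w : (u, w) \in gpairs e = (enum_rank u < enum_rank w) && e u w.
Proof.
apply/idP/idP.
- by case/allpairsPdep => a [b [_]]; rewrite mem_filter => /andP[H _] [-> ->].
- move=> H; apply/allpairsPdep; exists u, w; split; first by rewrite mem_enum.
  + by rewrite mem_filter H mem_enum.
  + by [].
Qed.

Lemma uniq_gpairs : uniq (gpairs e).
Proof.
apply: allpairs_uniq_dep; first exact: enum_uniq.
- by move=> x _; apply: filter_uniq; apply: enum_uniq.
- by move=> [a b] [c d] _ _ /= [-> ->].
Qed.

Lemma gpair_neq p : p \in gpairs e -> p.1 != p.2.
Proof.
case: p => u w; rewrite gpairsP => /andP[H _] /=; apply/eqP => E.
by move: H; rewrite E ltnn.
Qed.

Lemma gadgetP p t ed : ed \in gadget p t <->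
  [\/ ed = (vout p.1 t, gA p.1 p.2 t), ed = (vout p.2 t, gA p.1 p.2 t),
      ed = (gA p.1 p.2 t, gB p.1 p.2 t) |
      ed = (gB p.1 p.2 t, vin p.1 t.+1) \/ ed = (gB p.1 p.2 t, vin p.2 t.+1)].
Proof.
rewrite /gadget !inE; split.
- by case/orP=>[/eqP->|/orP[/eqP->|/orP[/eqP->|/orP[/eqP->|/eqP->]]]];
    [apply: Or41|apply: Or42|apply: Or43|apply: Or44; left|apply: Or44; right].
- by case=> [->|->|->|[->|->]]; rewrite eqxx ?orbT.
Qed.

Lemma gadget_edgesP T ed :
  ed \in gadget_edges T <-> exists p t, [/\ p \in gpairs e, t < T & ed \in gadget p t].
Proof.
split.
- case/flattenP => bl /allpairsP [[p t] [/= pin tin ->]] edin.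
  by exists p, t; rewrite mem_iota in tin; split.
- case=> p [t [pin tlt edin]]; apply/flattenP; exists (gadget p t) => //.
  by apply/allpairsP; exists (p, t); rewrite mem_iota.
Qed.

Lemma uniq_gadget p t : p \in gpairs e -> uniq (gadget p t).
Proof.
move=> /gpair_neq /negbTE H.
by case: t => [|t]; rewrite /gadget /vout /= !inE !xpair_eqE /= H /= !andbF.
Qed.

(* Every gadget edge determines the edge {u,v} and the time t of its gadget. *)
Definition gadget_key (ed : tnode V * tnode V) :=
  let nd := if node_tag ed.2 == 2 then ed.2 else ed.1 in (nd.1.1.2, nd.1.2, nd.2).

Lemma uniq_gadget_edges T : uniq (gadget_edges T).
Proof.
apply: (@uniq_flatten_by_key _ _ _ (fun z => Some (gadget_key z))
          (fun bl => omap gadget_key (ohead bl))).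
- by move=> bl /allpairsP [[p t] [/= pin _ ->]]; apply: uniq_gadget.
- move=> bl z /allpairsP [[p t] [/= pin _ ->]] /gadgetP.
  by case=> [->|->|->|[->|->]]; rewrite /gadget_key /= ?voutE; case: (t).
- rewrite map_allpairs; apply: allpairs_uniq; rewrite ?uniq_gpairs ?iota_uniq //.
  move=> [[u w] t] [[u' w'] t'] _ _.
  by case: t => [|t]; case: t' => [|t']; rewrite /vout /gadget_key /= => -[*]; subst.
Qed.

(* The four blocks of [net T] are told apart by the tags and times of the endpoints. *)
Definition edge_block (ed : tnode V * tnode V) : nat :=
  if (node_tag ed.2 == 0) && (node_time ed.2 == 0) then 0
  else if node_tag ed.2 == 1 then 1
  else if (node_tag ed.1 <= 1) && (node_tag ed.2 == 0) then 2 else 3.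

Lemma uniq_ten_edges T : uniq (net T).
Proof.
rewrite ten_edgesE.
have bL ed : ed \in map (loopback T) (enum 'I_n) -> edge_block ed = 0.
  by case/mapP => i _ ->.
have bV ed : ed \in vertex_edges T -> edge_block ed = 1.
  case/allpairsP => [[v t] [/= _ tin ->]]; rewrite mem_iota in tin.
  by rewrite /edge_block /= voutE; case: t tin.
have bW ed : ed \in wait_edges T -> edge_block ed = 2.
  by case/allpairsP => [[v t] [/= _ tin ->]]; rewrite /edge_block /= node_tag_vout.
have bG ed : ed \in gadget_edges T -> edge_block ed = 3.
  case/gadget_edgesP => p [t [_ _ /gadgetP]].
  by case=> [->|->|->|[->|->]]; rewrite /edge_block /= ?node_tag_vout.
have uniq_grid (f : V -> nat -> tnode V * tnode V) m : injective (fun vt => f vt.1 vt.2) ->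
    uniq [seq f v t | v <- enum V, t <- iota m T].
  move=> finj; apply: allpairs_uniq; rewrite ?enum_uniq ?iota_uniq //.
  by move=> [v t] [v' t'] _ _ E; apply: (finj (v, t) (v', t')).
apply: uniq_cat_disjoint.
- by rewrite map_inj_uniq ?enum_uniq // => i j [_ /xI_inj].
- apply: uniq_cat_disjoint.
  + by apply: uniq_grid => -[v t] [v' t'] /= [*]; subst.
  + apply: uniq_cat_disjoint.
    * by apply: uniq_grid => -[v t] [v' t'] /= [*]; subst.
    * exact: uniq_gadget_edges.
    * by move=> ed /bW E /bG; rewrite E.
  + by move=> ed /bV E; rewrite mem_cat => /orP [/bW|/bG]; rewrite E.
- by move=> ed /bL E; rewrite !mem_cat => /or3P [/bV|/bW|/bG]; rewrite E.
Qed.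

Lemma ten_edgesP T ed : ed \in net T <->
  [\/ exists k : 'I_n, ed = loopback T k,
      exists v t, 0 < t <= T /\ ed = (vin v t, vout v t),
      exists v t, t < T /\ ed = (vout v t, vin v t.+1) |
      exists p t, [/\ p \in gpairs e, t < T & ed \in gadget p t]].
Proof.
rewrite ten_edgesE !mem_cat; split.
- case/or4P.
  + by case/mapP => k _ ->; apply: Or41; exists k.
  + case/allpairsP => [[v t] [/= _ tin ->]]; apply: Or42; exists v, t.
    by rewrite mem_iota in tin; split => //; lia.
  + case/allpairsP => [[v t] [/= _ tin ->]]; apply: Or43; exists v, t.
    by rewrite mem_iota in tin; split => //; lia.
  + by move/gadget_edgesP => H; apply: Or44.
- case=> [[k ->]|[v [t [Ht ->]]]|[v [t [Ht ->]]]|/gadget_edgesP H]; apply/or4P.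
  + by apply: Or41; rewrite map_f ?mem_enum.
  + by apply: Or42; apply/allpairsP; exists (v, t); rewrite /= mem_enum mem_iota; split => //; lia.
  + by apply: Or43; apply/allpairsP; exists (v, t); rewrite /= mem_enum mem_iota; split => //; lia.
  + by apply: Or44.
Qed.

Lemma vertex_edge_in T v t : 0 < t <= T -> (vin v t, vout v t) \in net T.
Proof. by move=> H; apply/ten_edgesP; apply: Or42; exists v, t. Qed.

Lemma wait_edge_in T v t : t < T -> (vout v t, vin v t.+1) \in net T.
Proof. by move=> H; apply/ten_edgesP; apply: Or43; exists v, t. Qed.

Lemma loopback_in T k : loopback T k \in net T.
Proof. by apply/ten_edgesP; apply: Or41; exists k. Qed.

Lemma sum_edge_of T (P f : pred (tnode V * tnode V)) :
  \sum_(j < size (net T) | P (edge_of j)) f (edge_of j) = count (fun ed => P ed && f ed) (net T).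
Proof.
rewrite /edge_of -(big_tnth 0 addn (net T) P (fun ed => nat_of_bool (f ed))).
elim: (net T) => [|a l IH]; first by rewrite big_nil.
by rewrite big_cons /= -IH; case: (P a); case: (f a).
Qed.

Lemma size_ten_edges T : n <= size (net T).
Proof. by rewrite ten_edgesE size_cat size_map size_enum_ord leq_addr. Qed.

Lemma nth_ten_edges_loopback T d m (mn : m < n) : nth d (net T) m = loopback T (Ordinal mn).
Proof.
rewrite ten_edgesE nth_cat size_map size_enum_ord mn (nth_map (Ordinal mn)) ?size_enum_ord //.
by congr loopback; apply: val_inj; rewrite /= nth_enum_ord.
Qed.

Lemma edge_of_loopback T (j : 'I_(size (net T))) (jn : j < n) :
  edge_of j = loopback T (Ordinal jn).
Proof. by rewrite /edge_of (tnth_nth (loopback T (Ordinal jn))) nth_ten_edges_loopback. Qed.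

Lemma edge_of_inj T : injective (@edge_of _ e _ xI xG T).
Proof. by apply/tuple_uniqP; rewrite /= uniq_ten_edges. Qed.

Lemma ilp_valueE T (x : ilp_var e xI xG T) :
  ilp_value x = \sum_i x i (widen_ord (size_ten_edges T) i).
Proof.
apply: eq_bigr => i _.
by rewrite (big_pred1 (widen_ord (size_ten_edges T) i)) // => j; rewrite /= -val_eqE.
Qed.

Lemma ilp_value_le T (x : ilp_var e xI xG T) : ilp_value x <= n.
Proof.
rewrite ilp_valueE -[X in _ <= X]card_ord -sum1_card.
by apply: leq_sum => i _; exact: leq_b1.
Qed.

(** * From collision-free paths to a flow *)

Definition solution_within (P : 'I_n -> nat -> V) T :=
  [/\ forall i, P i 0 = xI i,
      forall i k, e (P i k) (P i k.+1) \/ P i k = P i k.+1,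
      forall i k, T <= k -> P i k = xG i &
      forall i k, i != k -> ~ collide (P i) (P k)].

Definition orient (u w : V) := if enum_rank u < enum_rank w then (u, w) else (w, u).

Lemma orient_cases u w : orient u w = (u, w) \/ orient u w = (w, u).
Proof. by rewrite /orient; case: ifP; [left|right]. Qed.

Lemma orient_inj a b c d : orient a b = orient c d -> (a = c /\ b = d) \/ (a = d /\ b = c).
Proof.
by case: (orient_cases a b) => ->; case: (orient_cases c d) => -> [-> ->]; auto.
Qed.

Lemma orient_gpairs u w : u != w -> e u w -> orient u w \in gpairs e.
Proof.
move=> uw euw; rewrite /orient; case: ltnP => H; rewrite gpairsP ?H ?euw //.
rewrite e_sym euw andbT ltn_neqAle H andbT.
by apply: contra uw => /eqP/val_inj/enum_rank_inj ->.
Qed.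

Section PathEdges.
Variables (T : nat) (q : nat -> V).

Definition moves t := (t < T) && (q t != q t.+1).

Definition gadget_nodes t :=
  [:: gA (orient (q t) (q t.+1)).1 (orient (q t) (q t.+1)).2 t;
      gB (orient (q t) (q t.+1)).1 (orient (q t) (q t.+1)).2 t].

(* The nodes visited by the path at time t, in order, and the node reached next;
   after time T the path returns to its start through the loopback edge. *)
Definition step_nodes t :=
  vin (q t) t :: (if t == 0 then [::] else [:: vout (q t) t]) ++
  (if moves t then gadget_nodes t else [::]).
Definition next_node t := if t < T then vin (q t.+1) t.+1 else vin (q 0) 0.
Definition step_edges t := zip (step_nodes t) (rcons (behead (step_nodes t)) (next_node t)).

Definition path_edges := flatten [seq step_edges t | t <- iota 0 T.+1].
Definition path_nodes := flatten [seq step_nodes t | t <- iota 0 T.+1].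

Lemma unzip1_path_edges : unzip1 path_edges = path_nodes.
Proof.
rewrite /path_edges /path_nodes /unzip1 map_flatten -map_comp; congr flatten.
by apply: eq_map => t /=; apply: unzip1_zip; rewrite size_rcons.
Qed.

Lemma node_time_step_nodes t nd : nd \in step_nodes t -> node_time nd = t.
Proof.
rewrite inE mem_cat => /orP [/eqP->//|/orP[]].
- by case: eqP => // _; rewrite inE => /eqP ->; rewrite node_time_vout.
- by case: (moves t); rewrite // !inE => /orP [] /eqP ->.
Qed.

Lemma uniq_step_nodes t : uniq (step_nodes t).
Proof.
apply: (@map_uniq _ _ node_tag); rewrite /step_nodes /gadget_nodes.
by case: (moves t); case: eqP => [->|/eqP nz] //=; rewrite ?voutE /= ?nz.
Qed.

Lemma uniq_path_nodes : uniq path_nodes.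
Proof.
apply: (@uniq_flatten_by_key _ _ _ (fun nd => Some (node_time nd))
          (fun bl => omap node_time (ohead bl))).
- by move=> bl /mapP [t _ ->]; apply: uniq_step_nodes.
- by move=> bl z /mapP [t _ ->] /node_time_step_nodes ->.
- by rewrite -map_comp (@eq_map _ _ _ Some) ?(map_inj_uniq (@Some_inj _)) ?iota_uniq.
Qed.

Lemma uniq_path_edges : uniq path_edges.
Proof. by apply: (@map_uniq _ _ fst); rewrite -/(unzip1 _) unzip1_path_edges uniq_path_nodes. Qed.

Lemma path_edges_conservation w :
  count (fun ed => ed.2 == w) path_edges = count (fun ed => ed.1 == w) path_edges.
Proof.
rewrite /path_edges !count_flatten_map.
have in_step t : count (fun ed => ed.2 == w) (step_edges t) =
                 count (pred1 w) (behead (step_nodes t)) + (next_node t == w).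
  rewrite -(count_map snd (pred1 w)) -[map snd _]/(unzip2 _) unzip2_zip ?size_rcons //.
  by rewrite -cats1 count_cat /= addn0.
have out_step t : count (fun ed => ed.1 == w) (step_edges t) =
                  (vin (q t) t == w) + count (pred1 w) (behead (step_nodes t)).
  by rewrite -(count_map fst (pred1 w)) -[map fst _]/(unzip1 _) unzip1_zip ?size_rcons.
have shift : \sum_(t <- iota 0 T.+1) (next_node t == w) =
             \sum_(t <- iota 0 T.+1) (vin (q t) t == w).
  rewrite -/(index_iota 0 T.+1) big_nat_recr // big_nat_recl //.
  rewrite /next_node ltnn addnC; congr addn.
  by apply: eq_big_nat => t /andP [_ ->].
rewrite (eq_bigr _ (fun t _ => in_step t)) (eq_bigr _ (fun t _ => out_step t)).
by rewrite !big_split /= shift addnC.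
Qed.

Lemma path_nodesP nd : nd \in path_nodes -> exists2 t, t <= T &
  [/\ node_time nd = t,
      node_tag nd <= 1 -> nd.1.1.2 = q t &
      1 < node_tag nd -> moves t /\ (nd.1.1.2, nd.1.2) = orient (q t) (q t.+1)].
Proof.
case/flatten_mapP => t; rewrite mem_iota add0n ltnS => tT ndt; exists t => //.
split; first exact: node_time_step_nodes.
- move: ndt; rewrite inE mem_cat => /orP [/eqP->//|/orP[]].
  + by case: eqP => // _; rewrite inE => /eqP ->; rewrite voutE.
  + by case: (moves t); rewrite // !inE => /orP [] /eqP ->.
- move: ndt; rewrite inE mem_cat => /orP [/eqP->//|/orP[]].
  + by case: eqP => // _; rewrite inE => /eqP ->; rewrite voutE /node_tag /=; case: (t != 0).
  + by case M: (moves t); rewrite // !inE => /orP [] /eqP -> _; split => //; case: (orient _ _).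
Qed.

End PathEdges.

Section PathInNetwork.
Variables (T : nat) (i : 'I_n) (q : nat -> V).
Hypotheses (q0 : q 0 = xI i) (q_step : forall k, e (q k) (q k.+1) \/ q k = q k.+1)
  (q_goal : forall k, T <= k -> q k = xG i).

Lemma gadget_nodes_edges_in t : t < T -> q t != q t.+1 ->
  let p := orient (q t) (q t.+1) in
  [/\ (vout (q t) t, gA p.1 p.2 t) \in net T, (gA p.1 p.2 t, gB p.1 p.2 t) \in net T &
      (gB p.1 p.2 t, vin (q t.+1) t.+1) \in net T].
Proof.
move=> tT nq p.
have eq : e (q t) (q t.+1) by case: (q_step t) => // E; rewrite E eqxx in nq.
have in_net ed : ed \in gadget p t -> ed \in net T.
  by move=> edin; apply/ten_edgesP; apply: Or44; exists p, t; rewrite orient_gpairs.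
split; apply: in_net; apply/gadgetP; rewrite /p; case: (orient_cases (q t) (q t.+1)) => -> /=;
  by [apply: Or41 | apply: Or42 | apply: Or43 | apply: Or44; right | apply: Or44; left].
Qed.

Lemma path_edges_sub : {subset path_edges T q <= net T}.
Proof.
move=> ed /flatten_mapP [t]; rewrite mem_iota add0n ltnS => tT.
rewrite /step_edges /step_nodes /next_node /=.
case M: (moves T q t).
- move: M => /andP [tT' nq]; case: (gadget_nodes_edges_in tT' nq) => H1 H2 H3.
  rewrite tT'; case: t tT tT' nq H1 H2 H3 => [|t] tT tT' nq H1 H2 H3 /=; rewrite !inE.
  + by case/orP => [/eqP->|/orP [/eqP->|/eqP->]].
  + case/orP => [/eqP->|/orP [/eqP->|/orP [/eqP->|/eqP->]]] //.
    by apply: vertex_edge_in; lia.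
- move: M; rewrite /moves; case: ltnP => tT' /=.
  + move/negbFE/eqP => E.
    case: t tT tT' E => [|t] tT tT' E /=; rewrite !inE.
    * by move/eqP ->; rewrite -E; apply: (wait_edge_in (q 0) tT').
    * case/orP => [/eqP->|/eqP->]; first by apply: vertex_edge_in; lia.
      by rewrite -E; apply: wait_edge_in.
  + move=> _; have tE : t = T by lia.
    subst t; have := loopback_in T i; rewrite /loopback -q0 -(q_goal (leqnn T)).
    by case: (T) => [|T'] /=; rewrite !inE => ?; [move/eqP ->|case/orP => /eqP ->];
       rewrite // ; apply: vertex_edge_in; lia.
Qed.

Lemma loopback_in_path_edges : loopback T i \in path_edges T q.
Proof.
apply/flatten_mapP; exists T; first by rewrite mem_iota add0n ltnS leqnn.
rewrite /step_edges /step_nodes /next_node /moves ltnn /loopback -q0 -(q_goal (leqnn T)).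
by case: (T) => [|T'] /=; rewrite !inE ?eqxx ?orbT.
Qed.

End PathInNetwork.

Section PathFlow.
Variables (T : nat) (q : 'I_n -> nat -> V).
Hypotheses (q0 : forall i, q i 0 = xI i)
  (q_step : forall i k, e (q i k) (q i k.+1) \/ q i k = q i k.+1)
  (q_goal : forall i k, T <= k -> q i k = xG i)
  (q_nocol : forall i k, i != k -> ~ collide (q i) (q k)).

(* A shared vertex copy is a vertex collision, a shared gadget node a swap. *)
Lemma path_nodes_disjoint i k nd : nd \in path_nodes T (q i) -> nd \in path_nodes T (q k) -> i = k.
Proof.
case/path_nodesP => t _ [tt Hv1 Hg1]; case/path_nodesP => t' _ [tt' Hv2 Hg2].
move: tt'; rewrite tt => tt'; subst t'.
case: (i =P k) => // /eqP nik; exfalso; apply: (q_nocol nik); exists t.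
case: (leqP (node_tag nd) 1) => tg; first by left; rewrite -(Hv1 tg) -(Hv2 tg).
case: (Hg1 tg) => _ E1; case: (Hg2 tg) => _ E2.
by case: (orient_inj (etrans (esym E1) E2)) => [[-> _]|[]]; [left|right].
Qed.

Definition path_flow : ilp_var e xI xG T := fun i j => edge_of j \in path_edges T (q i).

Lemma path_edges_source i ed : ed \in path_edges T (q i) -> ed.1 \in path_nodes T (q i).
Proof. by move=> H; rewrite -unzip1_path_edges; apply: map_f. Qed.

Lemma path_flow_feasible : ilp_feasible path_flow.
Proof.
split; [|split].
- move=> j; apply: sum_bool_le1 => i k Hi Hk.
  exact: (path_nodes_disjoint (path_edges_source Hi) (path_edges_source Hk)).
- move=> i j jn nji; apply/negP; rewrite /path_flow (edge_of_loopback jn).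
  case/path_edges_source/path_nodesP => t _ [].
  rewrite /loopback /= node_time_vout => <- /(_ (node_tag_vout _ _)).
  rewrite voutE /= q_goal // => /xG_inj E.
  by move: nji; rewrite -E /= eqxx.
- move=> w i; rewrite /inflow /outflow /path_flow.
  rewrite (@sum_edge_of T (fun ed => ed.2 == w) (mem (path_edges T (q i)))).
  rewrite (@sum_edge_of T (fun ed => ed.1 == w) (mem (path_edges T (q i)))).
  have sub := path_edges_sub (q0 i) (q_step i) (q_goal i).
  rewrite (@count_predI_mem _ _ _ (fun ed => ed.2 == w)) ?uniq_ten_edges ?uniq_path_edges //.
  rewrite (@count_predI_mem _ _ _ (fun ed => ed.1 == w)) ?uniq_ten_edges ?uniq_path_edges //.
  exact: path_edges_conservation.
Qed.

Lemma path_flow_value : ilp_value path_flow = n.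
Proof.
rewrite ilp_valueE -[RHS]card_ord -sum1_card; apply: eq_bigr => i _.
have iln : widen_ord (size_ten_edges T) i < n by exact: (ltn_ord i).
rewrite /path_flow (edge_of_loopback iln).
have -> : Ordinal iln = i by apply: val_inj.
by rewrite (loopback_in_path_edges (q0 i) (q_goal i)).
Qed.

End PathFlow.

(** * From a flow of value n to collision-free paths *)

(* Within time t the tags 0, 1, 2, 3 order v(t), v(t)', a, b. *)
Definition level (nd : tnode V) := 4 * node_time nd + node_tag nd.

Ltac node_inj H := rewrite /= /loopback /vin /gA /gB ?voutE /= in H; case: H => *; subst.

Ltac case_ten_edges :=
  case/ten_edgesP => [[k ->]|[v' [t' [Ht ->]]]|[v' [t' [Ht ->]]]|[p [t' [pin Ht /gadgetP H]]]].

Lemma edge_from_vout T ed v t : ed \in net T -> ed.1 = vout v t -> t < T ->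
  ed = (vout v t, vin v t.+1) \/
  exists p, [/\ p \in gpairs e, v = p.1 \/ v = p.2 & ed = (vout v t, gA p.1 p.2 t)].
Proof.
case_ten_edges => E tT.
1-3: by node_inj E; try lia; left.
move: E; case: H => [->|->|->|[->|->]] E; node_inj E; try lia.
- by right; exists p; split => //; left.
- by right; exists p; split => //; right.
Qed.

Lemma edge_from_vin T ed v t : ed \in net T -> ed.1 = vin v t -> 0 < t ->
  ed = (vin v t, vout v t).
Proof.
case_ten_edges => E t0.
1-3: by node_inj E; try lia.
by move: E; case: H => [->|->|->|[->|->]] E; node_inj E; try lia.
Qed.

Lemma edge_from_gA T ed u w t : ed \in net T -> ed.1 = gA u w t -> ed = (gA u w t, gB u w t).
Proof.
case_ten_edges => E.
1-3: by node_inj E; try lia.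
by move: E; case: H => [->|->|->|[->|->]] E; node_inj E; try lia.
Qed.

Lemma edge_from_gB T ed u w t : ed \in net T -> ed.1 = gB u w t ->
  ed = (gB u w t, vin u t.+1) \/ ed = (gB u w t, vin w t.+1).
Proof.
case_ten_edges => E.
1-3: by node_inj E; try lia.
by move: E; case: H => [->|->|->|[->|->]] E; node_inj E; try lia; [left|right].
Qed.

Lemma edge_into_vout T ed v t : ed \in net T -> ed.2 = vout v t -> 0 < t ->
  ed = (vin v t, vout v t).
Proof.
case_ten_edges => E t0.
1-3: by node_inj E; try lia.
by move: E; case: H => [->|->|->|[->|->]] E; node_inj E; try lia.
Qed.

Lemma edge_into_vin0 T ed v : ed \in net T -> ed.2 = vin v 0 -> exists k, ed = loopback T k.
Proof.
case_ten_edges => E; [by exists k | by node_inj E; lia..|].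
by move: E; case: H => [->|->|->|[->|->]] E; node_inj E; try lia.
Qed.

Lemma ten_edges0 ed : ed \in net 0 -> exists k, ed = loopback 0 k.
Proof. by case_ten_edges; [exists k | lia..]. Qed.

Lemma level_increases T ed : ed \in net T -> (exists k, ed = loopback T k) \/ level ed.1 < level ed.2.
Proof.
case_ten_edges; first by left; exists k.
all: right; rewrite /level ?voutE /node_tag /node_time /=; try lia.
by case: H => [->|->|->|[->|->]]; rewrite /= ?voutE /=; lia.
Qed.

Section FlowPaths.
Variables (T : nat) (x : ilp_var e xI xG T).
Hypotheses (x_feas : ilp_feasible x) (x_value : ilp_value x = n).

Definition uses i ed := [exists j, x i j && (edge_of j == ed)].

Local Notation occupies i v t := (0 < inflow x i (vin v t)).

Lemma x_uses i j : x i j = uses i (edge_of j).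
Proof.
apply/idP/existsP => [H|[j' /andP [H /eqP E]]]; first by exists j; rewrite H eqxx.
by rewrite -(edge_of_inj E).
Qed.

Lemma uses_ten_edges i ed : uses i ed -> ed \in net T.
Proof. by case/existsP => j /andP [_ /eqP <-]; rewrite /edge_of mem_tnth. Qed.

Lemma uses_capacity i k ed : uses i ed -> uses k ed -> i = k.
Proof.
case/existsP => j /andP [H1 /eqP E1]; case/existsP => j' /andP [H2 /eqP E2].
move: H2; rewrite (edge_of_inj (etrans E2 (esym E1))) => H2.
case: (i =P k) => // /eqP ik.
by have := leq_trans (sum_bool_ge2 (F := fun l => x l j) ik H1 H2) (x_feas.1 j).
Qed.

Lemma uses_loopback i k : uses i (loopback T k) -> k = i.
Proof.
have kl : k < size (net T) by apply: leq_trans (ltn_ord k) (size_ten_edges T).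
have kn : Ordinal kl < n by exact: (ltn_ord k).
have -> : loopback T k = edge_of (Ordinal kl).
  by rewrite (edge_of_loopback kn); congr loopback; apply: val_inj.
rewrite -x_uses; case: (k =P i) => // /eqP ki.
by case: x_feas => _ [/(_ i (Ordinal kl) kn ki) -> _].
Qed.

(* The value n forces every loopback edge to carry its own commodity. *)
Lemma uses_own_loopback i : uses i (loopback T i).
Proof.
have iln : widen_ord (size_ten_edges T) i < n by exact: (ltn_ord i).
have := sum_bool_eq_card (etrans (esym (ilp_valueE x)) (etrans x_value (esym (card_ord n)))) i.
rewrite x_uses (edge_of_loopback iln).
by have -> : Ordinal iln = i by apply: val_inj.
Qed.

Lemma inflowE i w : inflow x i w = count (fun ed => (ed.2 == w) && uses i ed) (net T).
Proof.
rewrite /inflow (eq_bigr (fun j => (uses i (edge_of j) : nat))) => [|j _]; last by rewrite x_uses.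
by rewrite (@sum_edge_of T (fun ed => ed.2 == w) (uses i)).
Qed.

Lemma outflowE i w : outflow x i w = count (fun ed => (ed.1 == w) && uses i ed) (net T).
Proof.
rewrite /outflow (eq_bigr (fun j => (uses i (edge_of j) : nat))) => [|j _]; last by rewrite x_uses.
by rewrite (@sum_edge_of T (fun ed => ed.1 == w) (uses i)).
Qed.

Lemma inflow_gt0P i w : 0 < inflow x i w <-> exists ed, [/\ ed \in net T, uses i ed & ed.2 = w].
Proof.
rewrite inflowE -has_count; split.
- by case/hasP => ed edin /andP [/eqP E H]; exists ed.
- by case=> ed [edin H E]; apply/hasP; exists ed; rewrite // E eqxx H.
Qed.

Lemma outflow_gt0P i w : 0 < outflow x i w <-> exists ed, [/\ ed \in net T, uses i ed & ed.1 = w].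
Proof.
rewrite outflowE -has_count; split.
- by case/hasP => ed edin /andP [/eqP E H]; exists ed.
- by case=> ed [edin H E]; apply/hasP; exists ed; rewrite // E eqxx H.
Qed.

Lemma inflow_outflow i w : inflow x i w = outflow x i w.
Proof. exact: x_feas.2.2. Qed.

Lemma count_uses_sources_targets i (S : pred (tnode V)) :
  count (fun ed => S ed.1 && uses i ed) (net T) = count (fun ed => S ed.2 && uses i ed) (net T).
Proof.
set Us := filter (uses i) (net T).
have P : perm_eq (map fst Us) (map snd Us).
  apply/allP => w _; apply/eqP; rewrite !count_map !count_filter.
  by have := inflow_outflow i w; rewrite inflowE outflowE => ->.
have := permP P S; rewrite !count_map !count_filter => H.
by rewrite (@eq_count _ _ (predI (preim fst S) (uses i))) // H.
Qed.

(* Only the loopback edge enters the lower side of a level cut, so by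
   conservation exactly one used edge leaves it. *)
Lemma level_cut_crossed_once i L : 0 < L -> L <= level (vout (xG i) T) ->
  count (fun ed => (level ed.1 < L) && ~~ (level ed.2 < L) && uses i ed) (net T) = 1.
Proof.
move=> L0 LT.
have := count_uses_sources_targets i (fun nd => level nd < L).
rewrite [X in X = _](count_split _ (fun ed => level ed.2 < L)).
rewrite [X in _ = X](count_split _ (fun ed => level ed.1 < L)).
have inside : count (fun z => (level z.1 < L) && uses i z && (level z.2 < L)) (net T) =
              count (fun z => (level z.2 < L) && uses i z && (level z.1 < L)) (net T).
  by apply: eq_count => z /=; case: (level z.1 < L); case: (level z.2 < L); case: (uses i z).
have entering : count (fun z => (level z.2 < L) && uses i z && ~~ (level z.1 < L)) (net T) = 1.
  apply: (@count_eq1 _ _ _ (loopback T i)); rewrite ?uniq_ten_edges ?loopback_in //.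
  - by rewrite /= uses_own_loopback /level /= /node_tag /node_time /= L0 andbT -leqNgt LT.
  - move=> z zs /andP [/andP [z2 Uz] z1].
    case: (level_increases zs) => [[k Ek]|up]; first by move: Uz; rewrite Ek => /uses_loopback ->.
    by move: z1; rewrite -leqNgt => /leq_ltn_trans/(_ up)/ltn_trans/(_ z2); rewrite ltnn.
rewrite inside entering => /addnI <-.
by apply: eq_count => z /=; case: (level z.1 < L); case: (level z.2 < L); case: (uses i z).
Qed.

Lemma occupies0 i v : occupies i v 0 -> v = xI i.
Proof.
case/inflow_gt0P => ed [edin Ued E].
case: (edge_into_vin0 edin E) => k Ek; move: Ued E; rewrite Ek => /uses_loopback ->.
by rewrite /loopback /vin /= => -[].
Qed.

Lemma occupies_start i : occupies i (xI i) 0.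
Proof. by apply/inflow_gt0P; exists (loopback T i); rewrite loopback_in uses_own_loopback. Qed.

Lemma occupies_vertex_edge i v t : 0 < t -> occupies i v t -> uses i (vin v t, vout v t).
Proof.
move=> t0; rewrite inflow_outflow => /outflow_gt0P [ed [edin Ued E]].
by move: Ued; rewrite (edge_from_vin edin E t0).
Qed.

Lemma occupies_unique i t v1 v2 : t <= T -> occupies i v1 t -> occupies i v2 t -> v1 = v2.
Proof.
case: (posnP t) => [-> _ /occupies0 -> /occupies0 -> //|t0 tT H1 H2].
have U1 := occupies_vertex_edge t0 H1; have U2 := occupies_vertex_edge t0 H2.
case: (v1 =P v2) => // /eqP ne.
have L_le : 4 * t + 1 <= level (vout (xG i) T) by rewrite /level voutE /node_tag /node_time /=; lia.
have := @level_cut_crossed_once i (4 * t + 1) ltac:(lia) L_le.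
suff : 2 <= count (fun ed => (level ed.1 < 4 * t + 1) && ~~ (level ed.2 < 4 * t + 1) && uses i ed)
                  (net T) by move=> ge2 eq1; rewrite eq1 in ge2.
apply: (@count_ge2 _ _ _ (vin v1 t, vout v1 t) (vin v2 t, vout v2 t)).
- by apply: contra ne => /eqP [->].
- exact: uses_ten_edges U1.
- exact: uses_ten_edges U2.
- by rewrite U1 /level /= voutE /node_tag /node_time /=; apply/andP; split; [lia|].
- by rewrite U2 /level /= voutE /node_tag /node_time /=; apply/andP; split; [lia|].
Qed.

Definition flow_step i v t w :=
  w = v \/ exists p, [/\ p \in gpairs e, uses i (gA p.1 p.2 t, gB p.1 p.2 t),
                        v = p.1 \/ v = p.2 & w = p.1 \/ w = p.2].

Lemma flow_step_from_vout i v t : t < T -> 0 < outflow x i (vout v t) ->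
  exists2 w, occupies i w t.+1 & flow_step i v t w.
Proof.
move=> tT /outflow_gt0P [ed [edin Ued E]].
have enter ed' w : ed' \in net T -> uses i ed' -> ed'.2 = w -> 0 < inflow x i w.
  by move=> *; apply/inflow_gt0P; exists ed'.
case: (edge_from_vout edin E tT) => [Ed|[p [pin vp Ed]]].
  by exists v; [apply: (enter ed); rewrite // Ed | left].
have : 0 < inflow x i (gA p.1 p.2 t) by apply: (enter ed); rewrite // Ed.
rewrite inflow_outflow => /outflow_gt0P [ed' [edin' Ued' E']].
have Ed' := edge_from_gA edin' E'.
have : 0 < inflow x i (gB p.1 p.2 t) by apply: (enter ed'); rewrite // Ed'.
rewrite inflow_outflow => /outflow_gt0P [ed'' [edin'' Ued'' E'']].
have Ugad : uses i (gA p.1 p.2 t, gB p.1 p.2 t) by rewrite -Ed'.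
have gadget_step w : w = p.1 \/ w = p.2 -> flow_step i v t w by right; exists p.
case: (edge_from_gB edin'' E'') => Ed''.
- by exists p.1; [apply: (enter ed''); rewrite // Ed'' | apply: gadget_step; left].
- by exists p.2; [apply: (enter ed''); rewrite // Ed'' | apply: gadget_step; right].
Qed.

Lemma flow_step_from_vin i v t : t < T -> occupies i v t ->
  exists2 w, occupies i w t.+1 & flow_step i v t w.
Proof.
move=> tT H; apply: flow_step_from_vout => //; case: t tT H => [|t] tT H.
  by rewrite -inflow_outflow.
rewrite -inflow_outflow; apply/inflow_gt0P; have U := occupies_vertex_edge (ltn0Sn t) H.
by exists (vin v t.+1, vout v t.+1); rewrite (uses_ten_edges U) U voutE.
Qed.

Lemma occupies_exists i t : t <= T -> exists v, occupies i v t.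
Proof.
elim: t => [_|t IH tT]; first by exists (xI i); apply: occupies_start.
by case: (IH (ltnW tT)) => v /(flow_step_from_vin tT) [w Hw _]; exists w.
Qed.

Lemma extract_eq i t v : t <= T -> occupies i v t -> extract x i t = v.
Proof.
move=> tT H; rewrite /extract tT; case: pickP => [v' H'|none] /=.
- exact: (occupies_unique tT H' H).
- by move: (none v); rewrite H.
Qed.

Lemma extract_occupies i t : t <= T -> occupies i (extract x i t) t.
Proof. by move=> tT; case: (occupies_exists i tT) => v Hv; rewrite (extract_eq tT Hv). Qed.

Lemma extract0 i : extract x i 0 = xI i.
Proof. exact: (extract_eq (leq0n _) (occupies_start i)). Qed.

Lemma extract_at_T i : extract x i T = xG i.
Proof.
case: (posnP T) => T0.
- have -> : extract x i T = xI i.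
    apply: extract_eq => //; have -> : vin (xI i) T = vin (xI i) 0 by rewrite T0.
    exact: occupies_start.
  have := occupies_start i; rewrite inflow_outflow => /outflow_gt0P [ed [edin Ued E]].
  have [k Ek] : exists k, ed = loopback T k.
    by move: edin; rewrite T0 => /ten_edges0 [k ->]; exists k.
  move: Ued E; rewrite Ek => /uses_loopback ->.
  by rewrite /loopback voutE T0 /vin /= => -[].
- apply: extract_eq => //.
  have : 0 < outflow x i (vout (xG i) T).
    by apply/outflow_gt0P; exists (loopback T i); rewrite loopback_in uses_own_loopback.
  rewrite -inflow_outflow => /inflow_gt0P [ed [edin Ued E]].
  move: Ued; rewrite (edge_into_vout edin E T0) => Ued.
  rewrite inflow_outflow; apply/outflow_gt0P.
  by exists (vin (xG i) T, vout (xG i) T); rewrite (uses_ten_edges Ued).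
Qed.

Lemma extract_goal i k : T <= k -> extract x i k = xG i.
Proof.
rewrite leq_eqVlt => /orP [/eqP <-|Tk]; first exact: extract_at_T.
by rewrite /extract leqNgt Tk.
Qed.

Lemma gpairs_unique p p' u w : p \in gpairs e -> p' \in gpairs e -> u != w ->
  u = p.1 \/ u = p.2 -> w = p.1 \/ w = p.2 ->
  u = p'.1 \/ u = p'.2 -> w = p'.1 \/ w = p'.2 -> p = p'.
Proof.
case: p => a b; case: p' => a' b'; rewrite !gpairsP /= => /andP [r1 _] /andP [r2 _] uw.
by case=> E1; case=> E2; case=> E3; case=> E4; subst;
  try (by rewrite eqxx in uw); try (by have := ltn_trans r1 r2; rewrite ltnn).
Qed.

Lemma extract_step i k : e (extract x i k) (extract x i k.+1) \/ extract x i k = extract x i k.+1.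
Proof.
case: (ltnP k T) => kT; last by right; rewrite !extract_goal // (leq_trans kT).
case: (flow_step_from_vin kT (extract_occupies i (ltnW kT))) => w Hw.
rewrite (extract_eq kT Hw) => -[->|[[a b] [pin _ up wp]]]; first by right.
case: (extract x i k =P w) => [->|/eqP ne]; first by right.
left; move: pin; rewrite gpairsP /= => /andP [_ eab].
by case: up => E1; case: wp => E2; rewrite E1 E2 in ne *;
  [rewrite eqxx in ne | | rewrite e_sym | rewrite eqxx in ne].
Qed.

Lemma extract_vertex_inj i k t : extract x i t = extract x k t -> i = k.
Proof.
case: (ltnP T t) => Tt; first by rewrite !extract_goal ?(ltnW Tt) // => /xG_inj.
case: (posnP t) => [->|t0]; first by rewrite !extract0 => /xI_inj.
move=> E; have Ui := occupies_vertex_edge t0 (extract_occupies i Tt).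
have Uk := occupies_vertex_edge t0 (extract_occupies k Tt).
by rewrite E in Ui; apply: uses_capacity Ui Uk.
Qed.

(* Two swapping robots would both use the a -> b edge of the same gadget. *)
Lemma extract_nocollide i k : i != k -> ~ collide (extract x i) (extract x k).
Proof.
move=> ik [t [/extract_vertex_inj E|[E1 E2]]]; first by rewrite E eqxx in ik.
case: (ltnP t T) => tT; last first.
  by move: E1; rewrite !extract_goal ?(leq_trans tT) // => /xG_inj E; rewrite E eqxx in ik.
case: (extract x i t =P extract x i t.+1) => [Eq|/eqP ne].
  by move: (@extract_vertex_inj i k t); rewrite Eq E2 => /(_ erefl) E; rewrite E eqxx in ik.
case: (flow_step_from_vin tT (extract_occupies i (ltnW tT))) => w Hw.
rewrite -(extract_eq tT Hw) => -[Ew|[p [pin Up up wp]]]; first by rewrite Ew eqxx in ne.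
case: (flow_step_from_vin tT (extract_occupies k (ltnW tT))) => w' Hw'.
rewrite -(extract_eq tT Hw') -E1 -E2 => -[Ew'|[p' [pin' Up' up' wp']]].
  by rewrite Ew' eqxx in ne.
have pp := gpairs_unique pin pin' ne up wp wp' up'.
by move: Up'; rewrite -pp => /(uses_capacity Up) E; rewrite E eqxx in ik.
Qed.

Lemma extract_solution_within : solution_within (extract x) T.
Proof.
split; [exact: extract0 | exact: extract_step | exact: extract_goal | exact: extract_nocollide].
Qed.

End FlowPaths.

(** * Solutions, makespans and the search range of TOMPP *)

Lemma is_kmin_exists (p : nat -> V) g T : (forall k, T <= k -> p k = g) ->
  exists2 km, is_kmin p g km & km <= T.
Proof.
elim: T => [H|T IH H]; first by exists 0; split => // k'' _.
case: (p T =P g) => [pT|pT].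
- case: IH => [k|km Hk kT]; last by exists km; rewrite // ltnW.
  by rewrite leq_eqVlt => /orP [/eqP <-|/H].
- exists T.+1 => //; split => // k'' Hk''.
  by case: (ltnP T k'') => // Tk; case: pT; apply: Hk''.
Qed.

Lemma solution_within_solution P T : solution_within P T ->
  is_solution e xI xG P /\ (forall TP, has_makespan xG P TP -> TP <= T).
Proof.
case=> P0 P_step P_goal P_nocol; split; first split => // i.
- split; first exact: P0.
  by case: (is_kmin_exists (P_goal i)) => km Hk _; exists km; split => // k _; exact: P_step.
- move=> TP [km [Hk ->]]; apply/bigmax_leqP => i _.
  by case: (Hk i) => _; apply; exact: P_goal.
Qed.

Lemma solution_step P i : is_solution e xI xG P ->
  forall k, e (P i k) (P i k.+1) \/ P i k = P i k.+1.
Proof.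
case=> /(_ i) [_ [km [[Hk _] Hmv]]] _ k.
case: (ltnP k km) => kkm; first exact: Hmv.
by right; rewrite !Hk // (leq_trans kkm).
Qed.

Lemma solution_makespan_within P TP : is_solution e xI xG P -> has_makespan xG P TP ->
  solution_within P TP.
Proof.
move=> hs [km [Hk ->]]; split; [by move=> i; case: hs => /(_ i) [] | by move=> i; apply: solution_step | | by case: hs].
by move=> i k Hk'; case: (Hk i) => H _; apply: H; apply: leq_trans Hk'; exact: leq_bigmax.
Qed.

Lemma solution_exists_within P : is_solution e xI xG P -> exists T, solution_within P T.
Proof.
move=> hs.
have [K HK] : exists K, forall i k, K <= k -> P i k = xG i.
  apply: (ex_common_bound (Q := fun i K => forall k, K <= k -> P i k = xG i)).
  - by move=> i k k' kk' H k'' Hk''; apply: H; apply: leq_trans Hk''.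
  - by move=> i; case: hs => /(_ i) [_ [km [[Hk _] _]]] _; exists km.
exists K; split => //; [by move=> i; case: hs => /(_ i) [] | by move=> i; apply: solution_step | by case: hs].
Qed.

Lemma walk_rcons k u v w : walk e k u v -> e v w -> walk e k.+1 u w.
Proof.
elim: k u => [|k IH] u.
- by rewrite /= => /eqP -> evw; apply/existsP; exists w; rewrite evw eqxx.
- move=> /existsP [w' /andP [euw' Hw]] evw; apply/existsP; exists w'.
  by rewrite euw'; apply: IH.
Qed.

Lemma walk_of_steps (q : nat -> V) : (forall k, e (q k) (q k.+1) \/ q k = q k.+1) ->
  forall k, exists2 l, l <= k & walk e l (q 0) (q k).
Proof.
move=> q_step; elim=> [|k [l lk Hl]]; first by exists 0 => //=.
case: (q_step k) => [ek|<-]; last by exists l => //; apply: leqW.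
by exists l.+1; [rewrite ltnS | apply: walk_rcons Hl ek].
Qed.

Lemma dist_le_walk l u v : walk e l u v -> dist e u v <= l.
Proof.
move=> H; rewrite /dist.
case: (ltnP l #|V|) => lV; last by apply: leq_trans (find_size _ _) _; rewrite size_iota.
rewrite leqNgt; apply/negP => /(before_find 0).
by rewrite nth_iota // add0n H.
Qed.

Lemma T_start_le P T : solution_within P T -> T_start e xI xG <= T.
Proof.
case=> P0 P_step P_goal _; apply/bigmax_leqP => i _.
case: (walk_of_steps (P_step i) T) => l lT.
by rewrite P0 P_goal // => /dist_le_walk/leq_trans; apply.
Qed.

(* Pigeonhole on the configurations at times 0..#|V|^n, then cut out the loop. *)
Lemma solution_within_shorten P T : solution_within P T -> #|V| ^ n < T ->
  exists P' T', solution_within P' T' /\ T' < T.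
Proof.
move=> [P0 P_step P_goal P_nocol] NT.
pose N := #|V| ^ n.
pose conf := fun t : 'I_N.+1 => [ffun i => P i t].
have : ~~ injectiveb conf.
  apply/negP => /injectiveP inj; have := leq_card conf inj.
  by rewrite card_ord card_ffun card_ord; lia.
case/injectivePn => a [b ab conf_ab].
have [a0 [b0 [ab0 b0N Hc]]] : exists a0 b0, [/\ a0 < b0, b0 <= N & forall i, P i a0 = P i b0].
  have Hc i : P i a = P i b by have := congr1 (fun g : {ffun 'I_n -> V} => g i) conf_ab; rewrite !ffunE.
  case: (ltngtP a b) => H.
  - by exists a, b; split => //; rewrite -ltnS.
  - by exists b, a; split => //; rewrite -ltnS.
  - by move/val_inj: H => H; rewrite H eqxx in ab.
pose d := b0 - a0.
pose Q := fun i t => if t <= a0 then P i t else P i (t + d).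
have shifted t : exists t', forall i, Q i t = P i t' /\ Q i t.+1 = P i t'.+1.
  case: (ltnP t a0) => ta; first by exists t => i; rewrite /Q ltnW // ta.
  exists (t + d) => i; rewrite /Q [t.+1 <= a0]leqNgt ltnS ta /= addSn; split => //.
  case: ifP => // ta'; have -> : t = a0 by apply/eqP; rewrite eqn_leq ta ta'.
  by rewrite Hc /d subnKC // ltnW.
exists Q, (T - d); split; last by rewrite /d; lia.
split.
- by move=> i; rewrite /Q leq0n.
- by move=> i t; case: (shifted t) => t' /(_ i) [-> ->].
- by move=> i k Hk; rewrite /Q; case: ifP => ka; [lia | apply: P_goal; rewrite /d in Hk *; lia].
- move=> i k ik [t Ht]; apply: (P_nocol _ _ ik); case: (shifted t) => t' Ht'.
  exists t'; case: (Ht' i) => [E1 E2]; case: (Ht' k) => [E3 E4].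
  by rewrite -E1 -E2 -E3 -E4.
Qed.

Lemma solution_within_T_bound P T : solution_within P T ->
  exists P' T', solution_within P' T' /\ T' <= T_bound V n.
Proof.
elim/ltn_ind: T P => T IH P hP.
case: (leqP T (#|V| ^ n)) => TN; first by exists P, T.
by case: (solution_within_shorten hP TN) => P' [T' [hP' T'T]]; exact: IH T'T P' hP'.
Qed.

(** * The algorithm *)

Section Algorithm.
Variable solve : forall T : nat, ilp_var e xI xG T.
Arguments solve : clear implicits.
Hypothesis solve_opt : forall T : nat, ilp_optimal (solve T).

Lemma solution_within_optimum P T : solution_within P T -> ilp_value (solve T) = n.
Proof.
case=> P0 P_step P_goal P_nocol; apply/eqP; rewrite eqn_leq ilp_value_le /=.
rewrite -{1}(path_flow_value P0 P_goal).
by case: (solve_opt T) => _; apply; apply: path_flow_feasible.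
Qed.

Lemma tompp_run_spec f T : (forall P T', solution_within P T' -> T <= T') ->
  match tompp_run solve f T with
  | Some P => exists T0, solution_within P T0 /\ (forall P' T', solution_within P' T' -> T0 <= T')
  | None => forall P T', solution_within P T' -> T + f < T'
  end.
Proof.
elim: f T => [|f IH] T T_le /=; case: ifP => [/eqP full|not_full].
- by exists T; split => //; apply: extract_solution_within (solve_opt T).1 full.
- move=> P T' hP; rewrite addn0 ltn_neqAle (T_le _ _ hP) andbT.
  by apply: contraFneq not_full => ->; rewrite (solution_within_optimum hP).
- by exists T; split => //; apply: extract_solution_within (solve_opt T).1 full.
- have T_lt P T' : solution_within P T' -> T.+1 <= T'.
    move=> hP; rewrite ltn_neqAle (T_le _ _ hP) andbT.
    by apply: contraFneq not_full => ->; rewrite (solution_within_optimum hP).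
  move: (IH _ T_lt); case: (tompp_run solve f T.+1) => // IH' P T' hP.
  by rewrite addnS -addSn; apply: IH' hP.
Qed.

End Algorithm.

End TimeExpandedNetwork.

Theorem proposition1 (V : finType) (e : rel V)
  (e_sym : symmetric e) (e_irr : irreflexive e)
  (e_conn : forall u v : V, connect e u v)
  (n : nat) (xI xG : 'I_n -> V) (xI_inj : injective xI) (xG_inj : injective xG)
  (solve : forall T : nat, ilp_var e xI xG T)
  (solve_opt : forall T : nat, ilp_optimal (solve T)) :
  match tompp solve with
  | Some P =>
      is_solution e xI xG P /\
      (forall (P' : 'I_n -> nat -> V) (TP TP' : nat),
          is_solution e xI xG P' -> has_makespan xG P TP -> has_makespan xG P' TP' ->
          TP <= TP')
  | None => ~ (exists P : 'I_n -> nat -> V, is_solution e xI xG P)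
  end.
Proof.
have bounded_solution P : is_solution e xI xG P ->
    exists P' T', solution_within e xI xG P' T' /\ T' <= T_bound V n.
  by case/solution_exists_within => T /solution_within_T_bound.
rewrite /tompp; case: ifP => start_le_bound; last first.
  case=> P /bounded_solution [P' [T' [hP' T'_le]]].
  by move: start_le_bound; rewrite (leq_trans (T_start_le hP') T'_le).
have := tompp_run_spec e_sym xI_inj xG_inj solve_opt (T_bound V n - T_start e xI xG)
          (fun P T' => @T_start_le _ _ _ _ _ P T').
case: (tompp_run _ _ _) => [P [T0 [hP T0_min]]|none].
- case: (solution_within_solution hP) => hs makespan_le; split => // P' TP TP' hs' hm hm'.
  exact: leq_trans (makespan_le _ hm) (T0_min _ _ (solution_makespan_within hs' hm')).
- case=> P /bounded_solution [P' [T' [hP' T'_le]]].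
  by have := none _ _ hP'; rewrite subnKC // ltnNge T'_le.
Qed.
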